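(* Let $A$ be a unital associative ring, $I\subset A$ a two-sided ideal, and $\{M_m\}$ a left $\{I^m\}$-module. Then there exists a special homomorphism $f\colon\{P_m\}\to\{M_m\}$ from a pseudo-free left $\{I^m\}$-module $\{P_m\}$ such that for every $m\geqslant1$ the image of $f_m$ equals $I^m\cdot M_m\subset M_m$.
   Context: A left $\{I^m\}$-module $\{M_m\}_{m\geqslant1}$ is a pro-abelian group (transition maps $\lambda_{k,m}\colon M_k\to M_m$, $k\geqslant m$) such that each $M_m$ is a left module over the non-unital ring $I^m$ and $\lambda_{k,m}(ax)=a\lambda_{k,m}(x)$ for $a\in I^k\subset I^m$, $x\in M_k$. A homomorphism is a family of $I^m$-module maps $f_m\colon M_m\to M'_m$ commuting with the transition maps. $\{P_m\}$ is pseudo-free if there are $I^m$-module isomorphisms $\varphi_m\colon I^m\otimes L_m\to P_m$ with $L_m$ free abelian groups, and homomorphisms $\sigma_{k,m}\colon L_k\to L_m$ ($k\geqslant m$) with $\lambda_{k,m}\circ\varphi_k=\varphi_m\circ(\iota\otimes\sigma_{k,m})$, where $\iota\colon I^k\to I^m$ is the inclusion. A homomorphism $f\colon\{P_m\}\to\{M_m\}$ from a pseudo-free module is special if there is a family of homomorphisms $g_m\colon L_m\to M_m$ compatible with the $\sigma_{k,m}$ and $\lambda_{k,m}$ such that $f_m(\varphi_m(a\otimes x))=a\,g_m(x)$ for all $a\in I^m$, $x\in L_m$. *)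

From HB Require Import structures.
From mathcomp Require Import all_boot all_order all_algebra.
Set Implicit Arguments. Unset Strict Implicit. Unset Printing Implicit Defensive.
Import GRing.Theory.
Local Open Scope ring_scope.

Inductive addspan (G : zmodType) (S : G -> Prop) : G -> Prop :=
  | addspan_in x : S x -> addspan S x
  | addspan0 : addspan S 0
  | addspanB x y : addspan S x -> addspan S y -> addspan S (x - y).

Definition is_ideal (A : pzRingType) (I : A -> Prop) : Prop :=
  [/\ I 0, (forall x y, I x -> I y -> I (x - y)),
      (forall r x, I x -> I (r * x)) & (forall r x, I x -> I (x * r))].

(* ipow I n = I^(n+1): ipow I 0 = I, I^(m+1) = additive span of I^m * I.
   ALL families below are indexed by n : nat standing for m = n+1 >= 1. *)
Fixpoint ipow (A : pzRingType) (I : A -> Prop) (n : nat) : A -> Prop :=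
  match n with
  | 0 => I
  | n'.+1 => addspan (fun z => exists u i, [/\ ipow I n' u, I i & z = u * i])
  end.

Definition ipt (A : pzRingType) (I : A -> Prop) (n : nat) := {a : A | ipow I n a}.

(* Left {I^m}-modules: component n is M_{n+1}, an abelian group with a left
   action of I^(n+1), together with transition maps lam k m : M_k -> M_m
   (m <= k) making {M_m} a pro-abelian group. *)
Record imod (A : pzRingType) (I : A -> Prop) := IMod {
  car : nat -> zmodType;
  act : forall n, ipt I n -> car n -> car n;
  lam : forall k m, (m <= k)%N -> car k -> car m;
  act_addr : forall n a (x y : car n), act a (x + y) = act a x + act a y;
  act_addl : forall n (a b c : ipt I n) (x : car n),
      sval c = sval a + sval b -> act c x = act a x + act b x;
  act_mul : forall n (a b c : ipt I n) (x : car n),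
      sval c = sval a * sval b -> act c x = act a (act b x);
  lam_add : forall k m (h : (m <= k)%N) (x y : car k),
      lam h (x + y) = lam h x + lam h y;
  lam_id : forall n (h : (n <= n)%N) (x : car n), lam h x = x;
  lam_comp : forall k l m (h1 : (m <= l)%N) (h2 : (l <= k)%N) (h3 : (m <= k)%N)
      (x : car k), lam h1 (lam h2 x) = lam h3 x;
  lam_act : forall k m (h : (m <= k)%N) (a : ipt I k) (a' : ipt I m) (x : car k),
      sval a = sval a' -> lam h (act a x) = act a' (lam h x)
}.

Definition additive_fun (G H : zmodType) (f : G -> H) : Prop :=
  forall x y, f (x + y) = f x + f y.

Definition imod_hom (A : pzRingType) (I : A -> Prop) (M N : imod I)
    (f : forall n, car M n -> car N n) : Prop :=
  [/\ (forall n, additive_fun (f n)),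
      (forall n (a : ipt I n) (x : car M n), f n (act a x) = act a (f n x))
    & (forall k m (h : (m <= k)%N) (x : car M k), f m (lam h x) = lam h (f k x))].

Definition is_free_ab (L : zmodType) : Prop :=
  exists (X : Type) (e : X -> L), forall (U : zmodType) (h : X -> U),
    exists u : L -> U, [/\ additive_fun u, (forall x, u (e x) = h x)
      & forall v : L -> U, additive_fun v -> (forall x, v (e x) = h x) ->
          forall y, v y = u y].

Definition biadd (A : pzRingType) (I : A -> Prop) (n : nat) (L U : zmodType)
    (c : ipt I n -> L -> U) : Prop :=
  (forall a x y, c a (x + y) = c a x + c a y) /\
  (forall (a b d : ipt I n) x, sval d = sval a + sval b -> c d x = c a x + c b x).

Definition is_tensor (A : pzRingType) (I : A -> Prop) (n : nat) (L T : zmodType)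
    (beta : ipt I n -> L -> T) : Prop :=
  biadd beta /\
  forall (U : zmodType) (c : ipt I n -> L -> U), biadd c ->
    exists u : T -> U, [/\ additive_fun u, (forall a x, u (beta a x) = c a x)
      & forall v : T -> U, additive_fun v -> (forall a x, v (beta a x) = c a x) ->
          forall y, v y = u y].

(* Pseudo-free structure on P: free abelian groups L_m, maps sigma_{k,m},
   and I^m-module isomorphisms phi_m : I^m (x) L_m -> P_m, encoded by
   beta_m(a, x) = phi_m(a (x) x).  beta_m universal biadditive says exactly
   that phi_m is an additive isomorphism; I^m-linearity of phi_m (where
   b.(a (x) x) = (ba) (x) x) and lam o phi_k = phi_m o (iota (x) sigma) are
   checked on the generators a (x) x. *)
Definition pseudo_free_data (A : pzRingType) (I : A -> Prop) (P : imod I)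
    (L : nat -> zmodType)
    (sigma : forall k m, (m <= k)%N -> L k -> L m)
    (beta : forall n, ipt I n -> L n -> car P n) : Prop :=
  [/\ (forall n, is_free_ab (L n)),
      (forall k m (h : (m <= k)%N), additive_fun (sigma k m h)),
      (forall n, is_tensor (beta n)),
      (forall n (a b c : ipt I n) (x : L n),
          sval c = sval b * sval a -> beta n c x = act b (beta n a x))
    & (forall k m (h : (m <= k)%N) (a : ipt I k) (a' : ipt I m) (x : L k),
          sval a = sval a' -> lam h (beta k a x) = beta m a' (sigma k m h x))].

Definition special (A : pzRingType) (I : A -> Prop) (P M : imod I)
    (L : nat -> zmodType)
    (sigma : forall k m, (m <= k)%N -> L k -> L m)
    (beta : forall n, ipt I n -> L n -> car P n)
    (f : forall n, car P n -> car M n) (g : forall n, L n -> car M n) : Prop :=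
  [/\ imod_hom f,
      (forall n, additive_fun (g n)),
      (forall k m (h : (m <= k)%N) (x : L k), lam h (g k x) = g m (sigma k m h x))
    & (forall n (a : ipt I n) (x : L n), f n (beta n a x) = act a (g n x))].

Definition imod_prod (A : pzRingType) (I : A -> Prop) (M : imod I) (n : nat) :
    car M n -> Prop :=
  addspan (fun y => exists (a : ipt I n) (x : car M n), y = act a x).

From HB Require Import structures.
From mathcomp Require Import all_boot all_order all_algebra.
From mathcomp Require Import finmap.
From mathcomp.multinomials Require Import monalg.
From Stdlib Require Import ProofIrrelevance ClassicalDescription.
Set Implicit Arguments. Unset Strict Implicit. Unset Printing Implicit Defensive.
Import GRing.Theory.
Local Open Scope ring_scope.

(* Take for L_m the free abelian group Z[M_m] on the underlying set of M_m, and
   for P_m = I^m (x) Z[M_m] the group I^m[M_m] of finitely supported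
   I^m-valued functions on M_m: I^m acts on the coefficients and the transition
   maps apply lambda to the support.  Then f_m (a e_x) = a x and g_m e_x = x,
   so the image of f_m is the subgroup generated by the products a x, which is
   I^m M_m.  Every identity to check is additive in the monoid-algebra
   argument, hence follows from functoriality of G[K] in G and K or from a
   computation on monomials. *)

Section AdditiveFun.
Variables (U V : zmodType) (f : U -> V).
Hypothesis fA : additive_fun f.

Lemma additive_fun0 : f 0 = 0.
Proof. by apply: (@addrI _ (f 0)); rewrite -fA !addr0. Qed.

Let f_additive : {additive U -> V} :=
  HB.pack f (GRing.isNmodMorphism.Build U V f (additive_fun0, fA)).

Lemma additive_funB x y : f (x - y) = f x - f y.
Proof. exact: (raddfB f_additive). Qed.

Lemma additive_funMz x (z : int) : f (x *~ z) = f x *~ z.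
Proof. exact: (raddfMz f_additive). Qed.

Lemma additive_fun_sum (T : Type) (r : seq T) (F : T -> U) :
  f (\sum_(i <- r) F i) = \sum_(i <- r) f (F i).
Proof. exact: (raddf_sum f_additive). Qed.

End AdditiveFun.

Lemma intmul_additive (G : zmodType) (x : G) : additive_fun ( *~%R x).
Proof. exact: raddfD. Qed.

Section SubgroupClosure.
Variables (G : zmodType) (S : G -> Prop).
Hypotheses (S0 : S 0) (SB : forall x y, S x -> S y -> S (x - y)).

Lemma subgroupD x y : S x -> S y -> S (x + y).
Proof. by move=> Sx Sy; rewrite -[y]opprK -[- y]sub0r; apply/SB/SB. Qed.

Lemma subgroup_sum (T : Type) (r : seq T) (F : T -> G) :
  (forall i, S (F i)) -> S (\sum_(i <- r) F i).
Proof.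
move=> SF; elim: r => [|i r IH]; first by rewrite big_nil.
by rewrite big_cons; apply: subgroupD.
Qed.

End SubgroupClosure.

Section MalgLift.
Variables (K : choiceType) (G U : zmodType).
Implicit Types (phi psi : K -> G -> U) (g : {malg G[K]}).

Definition mlift phi g : U := \sum_(k <- msupp g) phi k g@_k.

Lemma eq_mlift phi psi : (forall k c, phi k c = psi k c) -> mlift phi =1 mlift psi.
Proof. by move=> e g; apply: eq_bigr. Qed.

Lemma mliftD phi psi g :
  mlift (fun k c => phi k c + psi k c) g = mlift phi g + mlift psi g.
Proof. exact: big_split. Qed.

Variable phi : K -> G -> U.
Hypothesis phiA : forall k, additive_fun (phi k).

Lemma mlift_sum_over (d : {fset K}) g :
  (msupp g `<=` d)%fset -> mlift phi g = \sum_(k <- d) phi k g@_k.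
Proof.
move=> le_gd; rewrite /mlift [LHS](big_fset_incl _ le_gd) //= => k _.
by move/mcoeff_outdom ->; rewrite additive_fun0.
Qed.

Lemma mlift_additive : additive_fun (mlift phi).
Proof.
move=> g1 g2; set d := (msupp g1 `|` msupp g2)%fset.
rewrite (@mlift_sum_over d) ?msuppD_le // (@mlift_sum_over d) ?fsubsetUl //.
rewrite (@mlift_sum_over d) ?fsubsetUr // -big_split /=.
by apply: eq_bigr => k _; rewrite mcoeffD phiA.
Qed.

Lemma mliftU c k : mlift phi << c *g k >> = phi k c.
Proof. by rewrite (mlift_sum_over msuppU_le) big_seq_fset1 mcoeffUU. Qed.

End MalgLift.

Lemma additive_mlift (K : choiceType) (G U V : zmodType) (u : U -> V)
    (phi : K -> G -> U) (g : {malg G[K]}) :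
  additive_fun u -> u (mlift phi g) = mlift (fun k c => u (phi k c)) g.
Proof. by move=> uA; apply: additive_fun_sum. Qed.

Lemma malg_additive_ext (K : choiceType) (G U : zmodType) (u v : {malg G[K]} -> U) :
  additive_fun u -> additive_fun v ->
  (forall c k, u << c *g k >> = v << c *g k >>) -> u =1 v.
Proof.
move=> uA vA e g; rewrite (monalgE g) !additive_fun_sum //.
by apply: eq_bigr => k _; apply: e.
Qed.

Lemma malgU_int (K : choiceType) (z : int) (k : K) :
  << z *g k >> = << k >> *~ z :> {malg int[K]}.
Proof. by rewrite -raddfMz intz. Qed.

Lemma malg_int_free (K : choiceType) : is_free_ab {malg int[K]}.
Proof.
exists K, (fun k => << k >>) => U h.
have hA k := intmul_additive (h k).
exists (mlift (fun k (z : int) => h k *~ z)); split.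
- exact: mlift_additive.
- by move=> k; rewrite (mliftU hA).
- move=> v vA vh; apply: malg_additive_ext => // [|z k]; first exact: mlift_additive.
  by rewrite (mliftU hA) malgU_int additive_funMz // vh.
Qed.

Section MalgMap.
Variables (K K' : choiceType) (G G' : zmodType).
Implicit Types (s : K -> K') (t : {additive G -> G'}) (g : {malg G[K]}).

Definition malg_map s t : {malg G[K]} -> {malg G'[K']} :=
  mlift (fun k c => << t c *g s k >>).

Fact malg_map_coef_additive s t k : additive_fun (fun c => << t c *g s k >>).
Proof. by move=> c d; rewrite raddfD monalgUD. Qed.

Lemma malg_map_additive s t : additive_fun (malg_map s t).
Proof. exact/mlift_additive/malg_map_coef_additive. Qed.

Lemma malg_mapU s t c k : malg_map s t << c *g k >> = << t c *g s k >>.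
Proof. exact/mliftU/malg_map_coef_additive. Qed.

Lemma eq_malg_map s1 s2 t1 t2 :
  s1 =1 s2 -> t1 =1 t2 -> malg_map s1 t1 =1 malg_map s2 t2.
Proof. by move=> es et; apply: eq_mlift => k c; rewrite es et. Qed.

Lemma malg_mapD s t t1 t2 g : (forall c, t c = t1 c + t2 c) ->
  malg_map s t g = malg_map s t1 g + malg_map s t2 g.
Proof. by move=> et; rewrite -mliftD; apply: eq_mlift => k c; rewrite et monalgUD. Qed.

End MalgMap.

Lemma malg_map_id (K : choiceType) (G : zmodType) (g : {malg G[K]}) :
  malg_map id idfun g = g.
Proof. by rewrite [RHS]monalgE. Qed.

Lemma mlift_malg_map (K K' : choiceType) (G G' U : zmodType)
    (phi : K' -> G' -> U) (s : K -> K') (t : {additive G -> G'}) (g : {malg G[K]}) :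
  (forall k, additive_fun (phi k)) ->
  mlift phi (malg_map s t g) = mlift (fun k c => phi (s k) (t c)) g.
Proof.
move=> phiA; rewrite additive_mlift; last exact: mlift_additive.
by apply: eq_mlift => k c; rewrite mliftU.
Qed.

Lemma malg_map_comp (K1 K2 K3 : choiceType) (G1 G2 G3 : zmodType)
    (s1 : K2 -> K3) (t1 : {additive G2 -> G3})
    (s2 : K1 -> K2) (t2 : {additive G1 -> G2}) (g : {malg G1[K1]}) :
  malg_map s1 t1 (malg_map s2 t2 g) = malg_map (s1 \o s2) (t1 \o t2) g.
Proof. exact/mlift_malg_map/malg_map_coef_additive. Qed.

Section IdealPowers.
Variables (A : pzRingType) (I : A -> Prop).
Hypothesis hI : is_ideal I.

Lemma ipow_ideal n : is_ideal (ipow I n).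
Proof.
elim: n => [|n IH] //; case: hI => _ _ _ IMr; case: IH => _ _ IHMl _.
split=> [||r x|r x]; [exact: addspan0 | exact: addspanB | |].
- elim=> [_ [u [i [Iu Ii ->]]]| |y z _ hy _ hz].
  + by apply: addspan_in; exists (r * u), i; rewrite mulrA; split=> //; apply: IHMl.
  + by rewrite mulr0; apply: addspan0.
  + by rewrite mulrBr; apply: addspanB.
- elim=> [_ [u [i [Iu Ii ->]]]| |y z _ hy _ hz].
  + by apply: addspan_in; exists u, (i * r); rewrite mulrA; split=> //; apply: IMr.
  + by rewrite mul0r; apply: addspan0.
  + by rewrite mulrBl; apply: addspanB.
Qed.

Lemma ipowS n x : ipow I n.+1 x -> ipow I n x.
Proof.
case: (ipow_ideal n) => I0 IB _ IMr.
by elim=> [_ [u [i [Iu _ ->]]]| |y z _ hy _ hz]; [apply: IMr | | apply: IB].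
Qed.

Lemma ipow_le m k : (m <= k)%N -> forall x, ipow I k x -> ipow I m x.
Proof.
move=> /subnKC <-; elim: (k - m)%N => [|d IH] x; first by rewrite addn0.
by rewrite addnS => /ipowS /IH.
Qed.

End IdealPowers.

(* The ideal proof is a phantom index, so that the canonical Z-module
   structure on the carrier can depend on it. *)
Definition ideal_sub (A : pzRingType) (J : A -> Prop) of is_ideal J := {a : A | J a}.

Section IdealElements.
Variables (A : pzRingType) (J : A -> Prop) (hJ : is_ideal J).
Local Notation T := (ideal_sub hJ).

Lemma ideal_sub_inj (a b : T) : sval a = sval b -> a = b.
Proof.
by case: a b => a Ja [b Jb] /= eab; subst b; rewrite (proof_irrelevance _ Ja Jb).
Qed.

Definition ideal_sub_opt (x : A) : option T :=
  if excluded_middle_informative (J x) is left Jx then Some (exist _ x Jx) else None.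

Lemma svalK_ideal : pcancel (fun a : T => sval a) ideal_sub_opt.
Proof.
move=> [a Ja]; rewrite /ideal_sub_opt /=.
by case: excluded_middle_informative => // Ja'; rewrite (proof_irrelevance _ Ja' Ja).
Qed.

HB.instance Definition _ := Choice.copy T (pcan_type svalK_ideal).

Let J0 : J 0. Proof. by case: hJ. Qed.
Let JB x y : J x -> J y -> J (x - y). Proof. by case: hJ => _ JB _ _; apply: JB. Qed.
Let JN x : J x -> J (- x). Proof. by move=> Jx; rewrite -sub0r; apply: JB. Qed.
Let JD x y : J x -> J y -> J (x + y). Proof. exact: subgroupD. Qed.
Let JMl r x : J x -> J (r * x). Proof. by case: hJ => _ _ JMl _; apply: JMl. Qed.

Definition ideal_sub_zero : T := exist _ 0 J0.
Definition ideal_sub_add (a b : T) : T :=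
  exist _ (sval a + sval b) (JD (svalP a) (svalP b)).
Definition ideal_sub_opp (a : T) : T := exist _ (- sval a) (JN (svalP a)).

Fact ideal_sub_addA : associative ideal_sub_add.
Proof. by move=> a b c; apply: ideal_sub_inj; rewrite /= addrA. Qed.
Fact ideal_sub_addC : commutative ideal_sub_add.
Proof. by move=> a b; apply: ideal_sub_inj; rewrite /= addrC. Qed.
Fact ideal_sub_add0 : left_id ideal_sub_zero ideal_sub_add.
Proof. by move=> a; apply: ideal_sub_inj; rewrite /= add0r. Qed.
Fact ideal_sub_addN : left_inverse ideal_sub_zero ideal_sub_opp ideal_sub_add.
Proof. by move=> a; apply: ideal_sub_inj; rewrite /= addNr. Qed.

HB.instance Definition _ := GRing.isZmodule.Build T
  ideal_sub_addA ideal_sub_addC ideal_sub_add0 ideal_sub_addN.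

Lemma ideal_subMz (a : T) (z : int) : sval (a *~ z) = sval a *~ z.
Proof. exact: (@additive_funMz T A (fun a => sval a)). Qed.

Definition ideal_mull (r : A) (a : T) : T := exist _ (r * sval a) (JMl r (svalP a)).

Fact ideal_mull_is_zmod_morphism r : zmod_morphism (ideal_mull r).
Proof. by move=> a b; apply: ideal_sub_inj; rewrite /= mulrBr. Qed.

HB.instance Definition _ r :=
  GRing.isZmodMorphism.Build T T (ideal_mull r) (ideal_mull_is_zmod_morphism r).

End IdealElements.

Section IdealInclusion.
Variables (A : pzRingType) (J J' : A -> Prop) (hJ : is_ideal J) (hJ' : is_ideal J').
Hypothesis sJJ' : forall x, J x -> J' x.

Definition ideal_incl (a : ideal_sub hJ) : ideal_sub hJ' :=
  exist _ (sval a) (sJJ' (svalP a)).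

Fact ideal_incl_is_zmod_morphism : zmod_morphism ideal_incl.
Proof. by move=> a b; apply: ideal_sub_inj. Qed.

HB.instance Definition _ :=
  GRing.isZmodMorphism.Build _ _ ideal_incl ideal_incl_is_zmod_morphism.

End IdealInclusion.

Section MalgModule.
Variables (A : pzRingType) (I : A -> Prop) (hI : is_ideal I) (M : imod I).

Local Notation X n := (car M n).
Local Notation Ipow n := (ideal_sub (ipow_ideal hI n)).
Local Notation Pn n := {malg (Ipow n)[X n]}.
Local Notation Ln n := {malg int[X n]}.

Definition malg_act n (a : ipt I n) : Pn n -> Pn n := malg_map id (ideal_mull (sval a)).

Definition malg_lam k m (h : (m <= k)%N) : Pn k -> Pn m :=
  malg_map (lam h) (ideal_incl (ipow_ideal hI m) (ipow_le hI h)).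

Fact malg_act_addl n (a b c : ipt I n) (x : Pn n) :
  sval c = sval a + sval b -> malg_act c x = malg_act a x + malg_act b x.
Proof.
by move=> e; apply: malg_mapD => d; apply: ideal_sub_inj; rewrite /= e mulrDl.
Qed.

Fact malg_act_mul n (a b c : ipt I n) (x : Pn n) :
  sval c = sval a * sval b -> malg_act c x = malg_act a (malg_act b x).
Proof.
move=> e; rewrite /malg_act malg_map_comp; apply: eq_malg_map => // d.
by apply: ideal_sub_inj; rewrite /= e mulrA.
Qed.

Fact malg_lam_id n (h : (n <= n)%N) (x : Pn n) : malg_lam h x = x.
Proof.
rewrite -[RHS]malg_map_id; apply: eq_malg_map => [y|d]; first exact: lam_id.
exact: ideal_sub_inj.
Qed.

Fact malg_lam_comp k l m (h1 : (m <= l)%N) (h2 : (l <= k)%N) (h3 : (m <= k)%N)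
    (x : Pn k) :
  malg_lam h1 (malg_lam h2 x) = malg_lam h3 x.
Proof.
rewrite /malg_lam malg_map_comp; apply: eq_malg_map => [y|d]; first exact: lam_comp.
exact: ideal_sub_inj.
Qed.

Fact malg_lam_act k m (h : (m <= k)%N) (a : ipt I k) (a' : ipt I m) (x : Pn k) :
  sval a = sval a' -> malg_lam h (malg_act a x) = malg_act a' (malg_lam h x).
Proof.
move=> e; rewrite /malg_lam /malg_act !malg_map_comp; apply: eq_malg_map => // d.
by apply: ideal_sub_inj; rewrite /= e.
Qed.

Definition malg_imod : imod I :=
  IMod (fun n a => malg_map_additive _ _) malg_act_addl malg_act_mul
    (fun k m h => malg_map_additive _ _) malg_lam_id malg_lam_comp malg_lam_act.

Definition lattice_lam k m (h : (m <= k)%N) : Ln k -> Ln m := malg_map (lam h) idfun.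

Definition malg_tensor n (a : ipt I n) : Ln n -> Pn n :=
  malg_map id ( *~%R (a : Ipow n)).

Definition malg_eval n : Pn n -> X n := mlift (fun x (c : Ipow n) => act c x).

Definition lattice_eval n : Ln n -> X n := mlift (fun x (z : int) => x *~ z).

Fact act_additive_l n (x : X n) : additive_fun (fun c : Ipow n => act c x).
Proof. by move=> c d; apply: act_addl. Qed.

Lemma malg_tensor_is_tensor n : is_tensor (@malg_tensor n).
Proof.
have tensorA : biadd (@malg_tensor n).
  split=> [a|a b d x e]; first exact: malg_map_additive.
  by apply: malg_mapD => z; apply: ideal_sub_inj; rewrite /= !ideal_subMz e mulrzDl.
split=> // U c [cA1 cA2].
have cA k : additive_fun (fun p : Ipow n => c p << k >>) by move=> p q; apply: cA2.
exists (mlift (fun k (p : Ipow n) => c p << k >>)); split.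
- exact: mlift_additive.
- move=> a x; rewrite mlift_malg_map // [in RHS](monalgE x) (additive_fun_sum (cA1 a)).
  apply: eq_bigr => k _.
  by rewrite (malgU_int x@_k) (additive_funMz (cA k)) (additive_funMz (cA1 a)).
- move=> v vA vc; apply: malg_additive_ext => // [|p k]; first exact: mlift_additive.
  by rewrite mliftU // -vc /malg_tensor malg_mapU.
Qed.

Lemma malg_pseudo_free : pseudo_free_data (P := malg_imod) lattice_lam malg_tensor.
Proof.
split.
- by move=> n; apply: malg_int_free.
- by move=> k m h; apply: malg_map_additive.
- exact: malg_tensor_is_tensor.
- move=> n a b c x e; rewrite /= /malg_act /malg_tensor malg_map_comp.
  apply: eq_malg_map => // z; apply: ideal_sub_inj.
  by rewrite /= !ideal_subMz e mulrzAr.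
- move=> k m h a a' x e; rewrite /= /malg_lam /malg_tensor /lattice_lam !malg_map_comp.
  by apply: eq_malg_map => // z; apply: ideal_sub_inj; rewrite /= !ideal_subMz e.
Qed.

Lemma malg_eval_special :
  special (P := malg_imod) (M := M) lattice_lam malg_tensor malg_eval lattice_eval.
Proof.
split; first split.
- by move=> n; apply/mlift_additive/act_additive_l.
- move=> n a x; rewrite /= /malg_eval mlift_malg_map //; last exact: act_additive_l.
  rewrite additive_mlift; last exact: act_addr.
  by apply: eq_mlift => y c; apply: act_mul.
- move=> k m h x; rewrite /= /malg_eval mlift_malg_map //; last exact: act_additive_l.
  rewrite additive_mlift; last exact: lam_add.
  by apply: eq_mlift => y c; apply/esym/lam_act.
- by move=> n; apply/mlift_additive/intmul_additive.
- move=> k m h x; rewrite /lattice_eval mlift_malg_map //; last exact: intmul_additive.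
  rewrite additive_mlift; last exact: lam_add.
  by apply: eq_mlift => y z; apply: additive_funMz; apply: lam_add.
- move=> n a x; rewrite /= /malg_eval mlift_malg_map //; last exact: act_additive_l.
  rewrite additive_mlift; last exact: act_addr.
  apply: eq_mlift => y z.
  by rewrite (additive_funMz (@act_additive_l n y)) (additive_funMz (act_addr a)).
Qed.

Lemma malg_eval_image n (y : X n) : (exists p, malg_eval p = y) <-> imod_prod y.
Proof.
have evalA := mlift_additive (@act_additive_l n).
split=> [[p <-]|].
- apply: subgroup_sum => [||k]; [exact: addspan0 | exact: addspanB |].
  by apply: addspan_in; exists p@_k, k.
- elim=> [_ [a [x ->]]| |_ _ _ [p <-] _ [q <-]].
  + exists << (a : Ipow n) *g x >>.
    by rewrite /malg_eval mliftU //; apply: act_additive_l.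
  + by exists 0; apply: additive_fun0.
  + by exists (p - q); apply: additive_funB.
Qed.

End MalgModule.

Theorem lemma1p4 (A : pzRingType) (I : A -> Prop) (hI : is_ideal I) (M : imod I) :
  exists (P : imod I) (L : nat -> zmodType)
         (sigma : forall k m, (m <= k)%N -> L k -> L m)
         (beta : forall n, ipt I n -> L n -> car P n)
         (f : forall n, car P n -> car M n) (g : forall n, L n -> car M n),
    [/\ pseudo_free_data sigma beta,
        special sigma beta f g
      & forall n (y : car M n), (exists p, f n p = y) <-> imod_prod y].
Proof.
exists (malg_imod hI M), (fun n => {malg int[car M n]}), (@lattice_lam _ _ M),
  (@malg_tensor _ _ hI M), (@malg_eval _ _ hI M), (@lattice_eval _ _ M).
split; [exact: malg_pseudo_free | exact: malg_eval_special | exact: malg_eval_image].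
Qed.
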